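(* Let $(M,f,g)$ be an $(m,n)$-hypermodule over a commutative Krasner $(m,n)$-hyperring $(R,f',g')$ with scalar identity $1$, and let $Q$ be a proper subhypermodule of $M$. Let $S$ be a nonempty subset of $M\setminus\{0\}$ such that for all hyperideals $I_1,\dots,I_{n-1}$ of $R$ and all subhypermodules $N_1,N_2$ of $M$, if $f(N_1,g(I_i,1^{(n-2)},N_2),0^{(m-2)})\cap S\neq\varnothing$ for every $1\le i\le n-1$ then $f(N_1,g(I_1^{n-1},N_2),0^{(m-2)})\cap S\neq\varnothing$. If $Q$ is maximal (among subhypermodules of $M$) with respect to the property $Q\cap S=\varnothing$, then $Q$ is an $n$-ary classical prime subhypermodule of $M$.
   Context: A commutative Krasner $(m,n)$-hyperring with scalar identity $1$ is a triple $(R,f',g')$ where $(R,f')$ is a canonical $m$-ary hypergroup with zero $0$, $(R,g')$ is a commutative $n$-ary semigroup, $g'$ is distributive over $f'$, $0$ is a zero element for $g'$, and $g'(x,1^{(n-1)})=x$. Notation: $x_i^j$ denotes $x_i,\dots,x_j$ and $x^{(k)}$ denotes $x$ repeated $k$ times. A hyperideal $I$ of $R$ is a nonempty subset with $(I,f')$ an $m$-ary subhypergroup and $g'(x_1^{i-1},I,x_{i+1}^n)\subseteq I$. An $(m,n)$-hypermodule over $R$ is a triple $(M,f,g)$ with $(M,f)$ a canonical $m$-ary hypergroup with zero $0$ and $g:R^{n-1}\times M\to P^*(M)$ satisfying: $g(r_1^{n-1},f(x_1^m))=f(g(r_1^{n-1},x_1),\dots,g(r_1^{n-1},x_m))$;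 $g(r_1^{i-1},f'(s_1^m),r_{i+1}^{n-1},x)=f(g(r_1^{i-1},s_1,r_{i+1}^{n-1},x),\dots,g(r_1^{i-1},s_m,r_{i+1}^{n-1},x))$; $g(r_1^{i-1},g'(r_i^{i+n-1}),r_{i+n}^{2n-2},x)=g(r_1^{n-1},g(r_n^{2n-2},x))$; $g(r_1^{i-1},0,r_{i+1}^{n-1},x)=\{0\}$; moreover $g(1^{(n-1)},a)=\{a\}$. Operations applied to subsets mean unions over elements. A subhypermodule of $M$ is a nonempty $N\subseteq M$ with $(N,f)$ an $m$-ary subhypergroup and $g(R^{(n-1)},N)\subseteq N$. A proper subhypermodule $Q$ is $n$-ary classical prime if for all $r_1^{n-1}\in R$, $a\in M$, $g(r_1^{n-1},a)\subseteq Q$ implies $g(r_i,1^{(n-2)},a)\subseteq Q$ for some $1\le i\le n-1$. *)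

From mathcomp Require Import all_boot.
Set Implicit Arguments.
Unset Strict Implicit.
Unset Printing Implicit Defensive.

(* Sequences of arguments are written as nat -> T; an m-ary operation on
   ('I_m -> T) is applied to the first m entries of such a sequence. *)
Definition app (T U : Type) (m : nat) (op : ('I_m -> T) -> U) (x : nat -> T) : U :=
  op (fun i : 'I_m => x (nat_of_ord i)).

Definition scons (T : Type) (a : T) (s : nat -> T) : nat -> T :=
  fun k => if k is k'.+1 then s k' else a.

Definition set_at (T : Type) (x : nat -> T) (i : nat) (y : T) : nat -> T :=
  fun k => if k == i then y else x k.

Definition seteq (T : Type) (A B : T -> Prop) : Prop := forall z, A z <-> B z.
Definition subset (T : Type) (A B : T -> Prop) : Prop := forall z, A z -> B z.
Definition meets (T : Type) (A B : T -> Prop) : Prop := exists z, A z /\ B z.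

Section Hyperop.
Variables (T : Type) (m : nat) (f : ('I_m -> T) -> T -> Prop).

(* f applied to subsets A_0, ..., A_{m-1}: union over elements *)
Definition hopS (A : nat -> T -> Prop) : T -> Prop :=
  fun z => exists x : nat -> T, (forall k, k < m -> A k (x k)) /\ app f x z.

(* f(x_0^{i-1}, f(x_i^{i+m-1}), x_{i+m}^{2m-2}) *)
Definition nest (x : nat -> T) (i : nat) : T -> Prop :=
  hopS (fun k => if k < i then eq (x k)
                 else if k == i then app f (fun j => x (i + j))
                 else eq (x (k + m.-1))).

(* (P, f) is a canonical m-ary hypergroup with zero e (all quantifiers
   relativised to the subset P; take P := fun _ => True for the whole type) *)
Definition chg_on (P : T -> Prop) (e : T) : Prop :=
  (
      forall x : 'I_m -> T, (forall i, P (x i)) -> exists z, f x z) /\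
      (
      forall x : nat -> T, (forall k, k < (m + m).-1 -> P (x k)) ->
        forall i, i < m -> seteq (nest x i) (nest x 0)) /\
      (
      P e /\ (forall x, P x -> seteq (app f (scons x (fun _ => e))) (eq x)) /\
      (forall e', P e' -> (forall x, P x -> seteq (app f (scons x (fun _ => e'))) (eq x)) ->
         e' = e)) /\
      (
      forall x, P x -> exists! y, P y /\ app f (scons x (scons y (fun _ => e))) e) /\
      ((* reversibility: x in f(x_0^{m-1}) implies
         x_i in f(-x_{i-1},...,-x_0, x, -x_{m-1},...,-x_{i+1}) *)
      forall (x : T) (xs inv : nat -> T), P x ->
         (forall k, k < m -> [/\ P (xs k), P (inv k) &
                               app f (scons (xs k) (scons (inv k) (fun _ => e))) e]) ->
         app f xs x ->
         forall i, i < m ->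
           app f (fun p => if p < i then inv (i.-1 - p)
                           else if p == i then x else inv (m + i - p)) (xs i)) /\
      (
      forall (x : 'I_m -> T), (forall i, P (x i)) ->
        forall s : 'I_m -> 'I_m, bijective s -> seteq (f x) (f (fun i => x (s i)))).

Definition subhypergroup (N : T -> Prop) : Prop :=
  (forall x : 'I_m -> T, (forall i, N (x i)) -> forall z, f x z -> N z) /\
  exists e, chg_on N e.

End Hyperop.

Section Krasner.
Variables (R : Type) (m n : nat) (f' : ('I_m -> R) -> R -> Prop) (g' : ('I_n -> R) -> R)
          (zero one : R).

Definition krasner_hyperring : Prop :=
  chg_on f' (fun _ => True) zero /\
      (
      forall x : nat -> R, forall i, i < n ->
        app g' (fun k => if k < i then x k
                         else if k == i then app g' (fun j => x (i + j))
                         else x (k + n.-1))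
        = app g' (fun k => if k == 0 then app g' x else x (k + n.-1))) /\
      (
      forall (x : 'I_n -> R) (s : 'I_n -> 'I_n), bijective s -> g' x = g' (fun i => x (s i))) /\
      (
      forall (x a : nat -> R) i, i < n ->
        seteq (fun z => exists y, app f' a y /\ z = app g' (set_at x i y))
              (app f' (fun k => app g' (set_at x i (a k))))) /\
      (
      forall (x : nat -> R) i, i < n -> app g' (set_at x i zero) = zero) /\
      (
      forall x, app g' (scons x (fun _ => one)) = x).

Definition hyperideal (I : R -> Prop) : Prop :=
  [/\ exists x, I x,
      subhypergroup f' I
    & forall (x : nat -> R) i y, i < n -> I y -> I (app g' (set_at x i y))].

Section Module.
Variables (M : Type) (f : ('I_m -> M) -> M -> Prop) (g : ('I_n.-1 -> R) -> M -> M -> Prop)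
          (zeroM : M).

Definition appg (r : nat -> R) (x : M) : M -> Prop := g (fun j : 'I_n.-1 => r j) x.

Definition gset (r : nat -> R) (B : M -> Prop) : M -> Prop :=
  fun z => exists x, B x /\ appg r x z.

Definition gsetS (A : nat -> R -> Prop) (B : M -> Prop) : M -> Prop :=
  fun z => exists (r : nat -> R) x, (forall k, k < n.-1 -> A k (r k)) /\ B x /\ appg r x z.

Definition hypermodule : Prop :=
  chg_on f (fun _ => True) zeroM /\
      (forall r x, exists z, g r x z) /\
      (forall (r : nat -> R) (x : nat -> M),
        seteq (gset r (app f x)) (hopS f (fun k => appg r (x k)))) /\
      (forall (r s : nat -> R) i x, i < n.-1 ->
        seteq (fun z => exists y, app f' s y /\ appg (set_at r i y) x z)
              (hopS f (fun k => appg (set_at r i (s k)) x))) /\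
      (forall (r : nat -> R) x i, i < n.-1 ->
        seteq (appg (fun k => if k < i then r k
                              else if k == i then app g' (fun j => r (i + j))
                              else r (k + n.-1)) x)
              (gset r (appg (fun j => r (n.-1 + j)) x))) /\
      (forall (r : nat -> R) x i, i < n.-1 -> seteq (appg (set_at r i zero) x) (eq zeroM)) /\
      (forall a, seteq (appg (fun _ => one) a) (eq a)).

Definition subhypermodule (N : M -> Prop) : Prop :=
  [/\ exists x, N x,
      subhypergroup f N
    & forall (r : nat -> R) x z, N x -> appg r x z -> N z].

Definition hproper (N : M -> Prop) : Prop := exists x, ~ N x.

Definition classical_prime (Q : M -> Prop) : Prop :=
  [/\ subhypermodule Q, hproper Q &
      forall (r : nat -> R) (a : M), subset (appg r a) Q ->
        exists i, i < n.-1 /\ subset (appg (scons (r i) (fun _ => one)) a) Q].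

(* f(N1, g(A_0,...,A_{n-2}, N2), 0^{(m-2)}) *)
Definition fNgN (N1 : M -> Prop) (A : nat -> R -> Prop) (N2 : M -> Prop) : M -> Prop :=
  hopS f (scons N1 (scons (gsetS A N2) (fun _ => eq zeroM))).

Definition S_condition (S : M -> Prop) : Prop :=
  forall I : nat -> R -> Prop, (forall i, i < n.-1 -> hyperideal (I i)) ->
  forall N1 N2, subhypermodule N1 -> subhypermodule N2 ->
    (forall i, i < n.-1 -> meets (fNgN N1 (scons (I i) (fun _ => eq one)) N2) S) ->
    meets (fNgN N1 I N2) S.

Definition maximal_disjoint (Q S : M -> Prop) : Prop :=
  [/\ subhypermodule Q, ~ meets Q S &
      forall Q', subhypermodule Q' -> subset Q Q' -> ~ meets Q' S -> seteq Q' Q].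

End Module.
End Krasner.

From Stdlib Require Import FunctionalExtensionality Classical IndefiniteDescription.
From Pilot Require Import Defs.
From mathcomp Require Import all_boot zify.
Set Implicit Arguments.
Unset Strict Implicit.
Unset Printing Implicit Defensive.

(* Suppose g(r_1^{n-1}, a) ⊆ Q.  The residual W = {y | g(r_1^{n-1}, y) ⊆ Q} is a
   subhypermodule containing a.  For the principal hyperideals
   I_j = {g'(r_j, t, 1^{(n-2)}) | t ∈ R}, any g'(s_1^{n-1}, 1) with s_j ∈ I_j is a multiple
   of g'(r_1^{n-1}, 1), so f(Q, g(I_1^{n-1}, W), 0^{(m-2)}) ⊆ Q misses S.  The condition on S
   yields an i with f(Q, g(I_i, 1^{(n-2)}, W), 0^{(m-2)}) disjoint from S.  That set contains
   the subhypermodule Q + g(r_i, 1^{(n-2)}, W) ⊇ Q, which therefore equals Q by maximality;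
   since a ∈ W, g(r_i, 1^{(n-2)}, a) ⊆ Q.  For n = 2 there is nothing to prove. *)

Ltac case_ifs := repeat (case: ifP => /=); intros; try lia; try done.

Lemma app_ext (T U : Type) (m : nat) (op : ('I_m -> T) -> U) (x y : nat -> T) :
  (forall k, k < m -> x k = y k) -> app op x = app op y.
Proof.
move=> Exy; rewrite /app; congr op; apply: functional_extensionality => i.
exact: Exy (ltn_ord i).
Qed.

Lemma appg_ext (R M : Type) (n : nat) (g : ('I_n.-1 -> R) -> M -> M -> Prop)
    (r r' : nat -> R) :
  (forall k, k < n.-1 -> r k = r' k) -> appg g r = appg g r'.
Proof. exact: app_ext. Qed.

Lemma ord_fun_seq (T : Type) (m : nat) (x : 'I_m -> T) :
  0 < m -> exists xs : nat -> T, (fun i : 'I_m => xs i) = x.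
Proof.
case: m x => // m x _; exists (fun k => x (inord k)).
by apply: functional_extensionality => i; rewrite inord_val.
Qed.

Definition swapn (i j k : nat) : nat := if k == i then j else if k == j then i else k.

Lemma swapn_lt (m i j k : nat) : i < m -> j < m -> k < m -> swapn i j k < m.
Proof. by rewrite /swapn => ? ? ?; case: ifP => _ //; case: ifP. Qed.

Lemma swapnK (i j : nat) : involutive (swapn i j).
Proof.
move=> k; rewrite /swapn; case: (eqVneq k i) => [->|neq_ki].
  by case: (eqVneq j i) => [->|_] //; rewrite eqxx.
case: (eqVneq k j) => [->|neq_kj]; first by rewrite eqxx.
by rewrite (negbTE neq_ki) (negbTE neq_kj).
Qed.

Lemma swapn_bij (m i j : nat) : i < m -> j < m ->
  exists s : 'I_m -> 'I_m, bijective s /\ forall t, nat_of_ord (s t) = swapn i j t.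
Proof.
move=> lt_im lt_jm; pose s t := Ordinal (swapn_lt lt_im lt_jm (ltn_ord t)).
exists s; split => //; exists s => t; apply: val_inj; exact: swapnK.
Qed.

Lemma app_swapn (T U : Type) (m : nat) (op : ('I_m -> T) -> U) (i j : nat) (x : nat -> T) :
  (forall (y : 'I_m -> T) (s : 'I_m -> 'I_m), bijective s -> op y = op (fun k => y (s k))) ->
  i < m -> j < m -> app op x = app op (fun k => x (swapn i j k)).
Proof.
move=> opC lt_im lt_jm; have [s [bij_s sE]] := swapn_bij lt_im lt_jm.
rewrite /app (opC _ s bij_s); congr op; apply: functional_extensionality => t.
by rewrite sE.
Qed.

Lemma app_swapn_iff (T : Type) (m : nat) (op : ('I_m -> T) -> T -> Prop) (i j : nat)
    (x : nat -> T) (z : T) :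
  (forall y : 'I_m -> T, (forall k : 'I_m, True) ->
     forall s : 'I_m -> 'I_m, bijective s -> seteq (op y) (op (fun k => y (s k)))) ->
  i < m -> j < m -> app op x z <-> app op (fun k => x (swapn i j k)) z.
Proof.
move=> opC lt_im lt_jm; have [s [bij_s sE]] := swapn_bij lt_im lt_jm.
rewrite /app (opC _ (fun _ => I) s bij_s).
suff -> : (fun k : 'I_m => x (s k)) = (fun k : 'I_m => x (swapn i j k)) by [].
by apply: functional_extensionality => t; rewrite sE.
Qed.

Lemma nestE (T : Type) (m : nat) (f : ('I_m -> T) -> T -> Prop) (y : nat -> T) (i : nat) (z : T) :
  i < m ->
  nest f y i z <-> exists w, app f (fun j => y (i + j)) w /\
     app f (fun k => if k < i then y k else if k == i then w else y (k + m.-1)) z.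
Proof.
move=> lt_im; rewrite /nest /hopS; split.
- case=> x [xE fxz]; exists (x i); split.
    by have := xE i lt_im; rewrite ltnn eqxx.
  rewrite -(@app_ext _ _ _ f x) // => k lt_km; have := xE k lt_km.
  by case: ifP => _ //; case: eqP => [->|_].
- case=> w [fw fz]; eexists; split; last exact: fz.
  by move=> k _ /=; case: ifP => _ //; case: eqP.
Qed.

Section Hypergroup.
Variables (T : Type) (m : nat) (f : ('I_m -> T) -> T -> Prop) (e : T).
Hypotheses (m_gt1 : 1 < m) (chgT : chg_on f (fun _ => True) e).

Definition hadd (x y : T) : T -> Prop := app f (scons x (scons y (fun _ => e))).

Lemma neutral_at_e_neutral (e' : T) :
  seteq (app f (scons e (fun _ => e'))) (eq e) ->
  forall x, seteq (app f (scons x (fun _ => e'))) (eq x).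
Proof.
have [_ [assoc [[_ [neutral _]] _]]] := chgT.
move=> e'_neutral x z.
(* Bracketing x, e^(m-1), e'^(m-1) at 0 gives f(x, e'^(m-1)); bracketing it at m-1
   gives f(x, e^(m-2), f(e, e'^(m-1))) = f(x, e^(m-1)) = x. *)
pose Y k := if k == 0 then x else if k < m then e else e'.
have nestY := assoc Y (fun _ _ => I) m.-1 ltac:(lia).
split.
- move=> fz.
  have : nest f Y 0 z.
    apply/nestE; first lia.
    exists x; split.
      rewrite (@app_ext _ _ _ f _ (scons x (fun _ => e))); first exact/(neutral x I).
      by move=> [|k] Hk //=; rewrite /Y /=; case_ifs.
    rewrite (@app_ext _ _ _ f _ (scons x (fun _ => e'))) //.
    by move=> [|k] Hk //=; rewrite /Y /=; case_ifs.
  move/nestY/nestE => /(_ ltac:(lia)) [w [fw fz']].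
  have ew : e = w.
    apply/e'_neutral; rewrite (@app_ext _ _ _ f _ (fun j => Y (m.-1 + j))) //.
    by move=> [|k] Hk //=; rewrite /Y /=; case_ifs.
  subst w; apply/(neutral x I).
  rewrite (@app_ext _ _ _ f _
    (fun k => if k < m.-1 then Y k else if k == m.-1 then e else Y (k + m.-1))) //.
  by move=> [|k] Hk //=; rewrite /Y /=; case_ifs.
- move=> <-.
  have : nest f Y m.-1 x.
    apply/nestE; first lia.
    exists e; split.
      rewrite (@app_ext _ _ _ f _ (scons e (fun _ => e'))); first exact/e'_neutral.
      by move=> [|k] Hk //=; rewrite /Y /=; case_ifs.
    rewrite (@app_ext _ _ _ f _ (scons x (fun _ => e))); first exact/(neutral x I).
    by move=> [|k] Hk //=; rewrite /Y /=; case_ifs.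
  move/nestY/nestE => /(_ ltac:(lia)) [w [fw fx]].
  have xw : x = w.
    apply/(neutral x I); rewrite (@app_ext _ _ _ f _ (fun j => Y (0 + j))) //.
    by move=> [|k] Hk //=; rewrite /Y /=; case_ifs.
  subst w; rewrite (@app_ext _ _ _ f _
    (fun k => if k < 0 then Y k else if k == 0 then x else Y (k + m.-1))) //.
  by move=> [|k] Hk //=; rewrite /Y /=; case_ifs.
Qed.

Lemma chg_on_sub (P : T -> Prop) :
  P e -> (forall x, P x -> exists y, P y /\ hadd x y e) -> chg_on f P e.
Proof.
have [hop [assoc [[_ [neutral e_uniq]] [inv [rev comm]]]]] := chgT.
move=> Pe invP; split; first by move=> x _; exact: hop.
split; first by move=> x _; exact: assoc.
split.
  split=> //; split; first by move=> x _; exact: neutral.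
  move=> e' _ e'_neutral; apply: e_uniq => // x _.
  exact/neutral_at_e_neutral/e'_neutral.
split.
  move=> x Px; have [y [Py xy0]] := invP x Px.
  exists y; split => // y' [_ xy'0].
  have [y0 [_ uniq]] := inv x I.
  by rewrite -(uniq y (conj I xy0)) -(uniq y' (conj I xy'0)).
split; last by move=> x _; exact: comm.
move=> x xs inv' _ xsP fxs i lt_im; apply: (rev x xs inv' I) => // k lt_km.
by case: (xsP k lt_km).
Qed.

Lemma haddr0 (x z : T) : hadd x e z <-> x = z.
Proof.
have [_ [_ [[_ [neutral _]] _]]] := chgT.
rewrite /hadd -(neutral x I).
by rewrite (@app_ext _ _ _ f _ (scons x (fun _ => e))) // => [[|[|k]]].
Qed.

Lemma haddC (x y z : T) : hadd x y z <-> hadd y x z.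
Proof.
have [_ [_ [_ [_ [_ comm]]]]] := chgT.
rewrite /hadd (@app_swapn_iff _ _ f 0 1 _ z comm) //; last lia.
by rewrite (@app_ext _ _ _ f _ (scons y (scons x (fun _ => e)))) // => [[|[|k]]].
Qed.

Lemma haddA (x y w z : T) :
  (exists u, hadd x y u /\ hadd u w z) <-> (exists v, hadd y w v /\ hadd x v z).
Proof.
have [_ [assoc [_ [_ [_ comm]]]]] := chgT.
pose Y k := if k == 0 then x else if k == 1 then y else if k == m then w else e.
have nestY := assoc Y (fun _ _ => I) 1 m_gt1.
have nest0 z' : nest f Y 0 z' <-> exists u, hadd x y u /\ hadd u w z'.
  rewrite nestE; last lia.
  have inner u : app f (fun j => Y (0 + j)) u <-> hadd x y u.
    by rewrite /hadd (@app_ext _ _ _ f _ (fun j => Y (0 + j))) // => [[|[|k]]] Hk //=;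
      rewrite /Y; case_ifs.
  have outer u : app f (fun k => if k < 0 then Y k else if k == 0 then u else Y (k + m.-1)) z'
                 <-> hadd u w z'.
    by rewrite /hadd (@app_ext _ _ _ f _ (fun k => if k < 0 then Y k else if k == 0 then u
      else Y (k + m.-1))) // => [[|[|k]]] Hk //=; rewrite /Y; case_ifs.
  by split=> [[u [/inner xyu /outer uwz]]|[u [/inner xyu /outer uwz]]]; exists u.
have nest1 z' : nest f Y 1 z' <-> exists v, hadd y w v /\ hadd x v z'.
  rewrite nestE //.
  have inner v : app f (fun j => Y (1 + j)) v <-> hadd y w v.
    rewrite (@app_swapn_iff _ _ f 1 m.-1 _ v comm) //; last lia.
    by rewrite /hadd (@app_ext _ _ _ f _ (scons y (scons w (fun _ => e)))) //
      => [[|[|k]]] Hk //=; rewrite /Y /swapn; case_ifs.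
  have outer v : app f (fun k => if k < 1 then Y k else if k == 1 then v else Y (k + m.-1)) z'
                 <-> hadd x v z'.
    by rewrite /hadd (@app_ext _ _ _ f _ (fun k => if k < 1 then Y k else if k == 1 then v
      else Y (k + m.-1))) // => [[|[|k]]] Hk //=; rewrite /Y; case_ifs.
  by split=> [[v [/inner ywv /outer xvz]]|[v [/inner ywv /outer xvz]]]; exists v.
by split=> [/nest0/nestY/nest1|/nest1/nestY/nest0].
Qed.

Lemma haddACA (q1 t1 z1 q2 t2 z2 z : T) :
  hadd q1 t1 z1 -> hadd q2 t2 z2 -> hadd z1 z2 z ->
  exists q t, [/\ hadd q1 q2 q, hadd t1 t2 t & hadd q t z].
Proof.
move=> h1 h2 h.
have [v [/haddC t1z2v q1vz]] := (haddA q1 t1 z2 z).1 (ex_intro _ z1 (conj h1 h)).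
have [t [t2t1t q2tv]] := (haddA q2 t2 t1 v).1 (ex_intro _ z2 (conj h2 t1z2v)).
have [q [q1q2q qtz]] := (haddA q1 q2 t z).2 (ex_intro _ v (conj q2tv q1vz)).
by exists q, t; split => //; apply/haddC.
Qed.

Lemma hop_closed_hadd (P : T -> Prop) :
  P e -> (forall x y z, P x -> P y -> hadd x y z -> P z) ->
  forall xs : nat -> T, (forall k, k < m -> P (xs k)) -> forall z, app f xs z -> P z.
Proof.
have [_ [assoc [[_ [neutral _]] _]]] := chgT.
move=> Pe haddP xs xsP.
pose F j p := if p + j < m then xs (p + j) else e.
(* Induct on the number of entries of xs not yet absorbed into a binary sum. *)
suff closedF d j : j + d = m -> forall z, app f (F j) z -> P z.
  move=> z fz; apply: (closedF m 0) => //.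
  by rewrite (@app_ext _ _ _ f _ xs) // => k lt_km; rewrite /F addn0 lt_km.
elim: d j => [|d IH] j jd z fz.
  suff <- : e = z by [].
  apply/(neutral e I); rewrite (@app_ext _ _ _ f _ (F j)) // => [[|k]] Hk /=; rewrite /F; case_ifs.
have : nest f (F j) 0 z.
  apply/nestE; first lia.
  exists z; split; first by rewrite (@app_ext _ _ _ f _ (F j)).
  rewrite (@app_ext _ _ _ f _ (scons z (fun _ => e))); first exact/(neutral z I z).
  by move=> [|k] Hk /=; rewrite /F; case_ifs.
move/(assoc _ (fun _ _ => I) 1 m_gt1)/nestE => /(_ m_gt1) [w [fw fz']].
have Pw : P w.
  apply: (IH j.+1); first lia.
  by rewrite (@app_ext _ _ _ f _ (fun k => F j (1 + k))) // => k _; rewrite /F addSn addnS.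
apply: (haddP (xs j) w) => //; first by apply: xsP; lia.
rewrite /hadd (@app_ext _ _ _ f _
  (fun k => if k < 1 then F j k else if k == 1 then w else F j (k + m.-1))) //.
by move=> [|[|k]] Hk /=; rewrite /F; case_ifs.
Qed.

End Hypergroup.

Section KrasnerHyperring.
Variables (R : Type) (m n : nat) (f' : ('I_m -> R) -> R -> Prop) (g' : ('I_n -> R) -> R)
          (zero one : R).
Hypothesis Kr : krasner_hyperring f' g' zero one.

Definition gmul (x y : R) : R := app g' (scons x (scons y (fun _ => one))).

Lemma gmulr1 (x : R) : gmul x one = x.
Proof.
have [_ [_ [_ [_ [_ g1]]]]] := Kr; rewrite /gmul -{2}(g1 x).
by apply: app_ext => [[|[|k]]].
Qed.

Lemma gmulC (x y : R) : 1 < n -> gmul x y = gmul y x.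
Proof.
move=> n_gt1; have [_ [_ [gC _]]] := Kr; rewrite /gmul (@app_swapn _ _ _ g' 0 1) //; last lia.
by apply: app_ext => [[|[|k]]].
Qed.

Lemma gmul1r (x : R) : 1 < n -> gmul one x = x.
Proof. by move=> n_gt1; rewrite gmulC // gmulr1. Qed.

Lemma gmulr0 (x : R) : 1 < n -> gmul x zero = zero.
Proof.
move=> n_gt1; have [_ [_ [_ [_ [g0 _]]]]] := Kr.
rewrite -{2}(g0 (scons x (fun _ => one)) 1 n_gt1) /gmul.
by apply: app_ext => [[|[|k]]].
Qed.

Lemma app_g_head (x : nat -> R) : 1 < n ->
  app g' x = gmul (x 0) (app g' (fun k => if k < n.-1 then x k.+1 else one)).
Proof.
move=> n_gt1; have [_ [gA [_ [_ [_ g1]]]]] := Kr.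
pose y p := if p < n then x p else one.
have := gA y 1 n_gt1.
have -> : app g' (fun k => if k == 0 then app g' y else y (k + n.-1)) = app g' x.
  rewrite -(g1 (app g' x)); apply: app_ext => [[|k]] Hk /=.
    by apply: app_ext => j lt_jn; rewrite /y lt_jn.
  by rewrite /y; case_ifs.
move=> <-; rewrite /gmul; apply: app_ext => [[|[|k]]] Hk /=; rewrite /y; case_ifs.
by apply: app_ext => j Hj; case_ifs.
Qed.

Lemma gmulA (x y z : R) : 2 < n -> gmul (gmul x y) z = gmul x (gmul y z).
Proof.
move=> n_gt2; have n_gt1 := ltnW n_gt2; have [_ [_ [gC _]]] := Kr.
have g3 a b c : app g' (scons a (scons b (scons c (fun _ => one)))) = gmul a (gmul b c).
  rewrite app_g_head //=; congr gmul.
  by apply: app_ext => [[|[|k]]] Hk /=; case_ifs.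
rewrite -g3 (@app_swapn _ _ _ g' 0 2) //; last lia.
rewrite (@app_ext _ _ _ g' _ (scons z (scons y (scons x (fun _ => one))))); last first.
  by move=> [|[|[|k]]].
by rewrite g3 gmulC // [gmul y x]gmulC.
Qed.

Lemma gmulACA (a b c d : R) : 2 < n -> gmul (gmul a b) (gmul c d) = gmul (gmul a c) (gmul b d).
Proof.
move=> n_gt2; have n_gt1 := ltnW n_gt2.
by rewrite !gmulA // -[gmul b (gmul c d)]gmulA // [gmul b c]gmulC // gmulA.
Qed.

Lemma g_set_at_linear (x : nat -> R) (i : nat) :
  1 < n -> i < n -> exists c, forall v, app g' (set_at x i v) = gmul v c.
Proof.
move=> n_gt1 lt_in; have [_ [_ [gC _]]] := Kr.
exists (app g' (fun k => if k < n.-1 then set_at x i one (swapn 0 i k.+1) else one)) => v.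
rewrite (@app_swapn _ _ _ g' 0 i) //; last lia.
rewrite app_g_head //; congr gmul; first by rewrite /set_at /swapn eqxx; case_ifs.
by apply: app_ext => k _; case: ifP => // _; rewrite /set_at /swapn; case_ifs.
Qed.

Lemma g_set_at_gmul (x : nat -> R) (i : nat) (a b : R) :
  2 < n -> i < n -> app g' (set_at x i (gmul a b)) = gmul a (app g' (set_at x i b)).
Proof.
move=> n_gt2 lt_in; have [c xc] := g_set_at_linear x (ltnW n_gt2) lt_in.
by rewrite !xc gmulA.
Qed.

Definition gprefix (u : nat -> R) (k : nat) : nat -> R := fun j => if j < k then u j else one.

Lemma app_gprefixS (u : nat -> R) (k : nat) :
  1 < n -> k < n -> app g' (gprefix u k.+1) = gmul (u k) (app g' (gprefix u k)).
Proof.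
move=> n_gt1 lt_kn; have [c uc] := g_set_at_linear (gprefix u k) n_gt1 lt_kn.
have -> : gprefix u k.+1 = set_at (gprefix u k) k (u k).
  apply: functional_extensionality => j; rewrite /gprefix /set_at ltnS leq_eqVlt.
  by case: eqP => [->|].
have set_one : set_at (gprefix u k) k one = gprefix u k.
  apply: functional_extensionality => j; rewrite /gprefix /set_at.
  by case: eqP => [->|]; rewrite ?ltnn.
by rewrite -[in RHS]set_one !uc gmul1r.
Qed.

Definition gprod (s : nat -> R) : R := app g' (gprefix s n.-1).

Definition principal (c : R) : R -> Prop := fun s => exists t, s = gmul c t.

Lemma gprod_principal (r s : nat -> R) :
  2 < n -> (forall k, k < n.-1 -> principal (r k) (s k)) -> principal (gprod r) (gprod s).
Proof.
move=> n_gt2 rs; rewrite /gprod.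
suff prefix_dvd k : k <= n.-1 -> principal (app g' (gprefix r k)) (app g' (gprefix s k)).
  exact: prefix_dvd.
elim: k => [|k IH] lt_kn.
  by exists one; rewrite gmulr1; congr app; apply: functional_extensionality.
have [c sc] := IH (ltnW lt_kn); have [t stE] := rs k lt_kn.
have lt_k_n : k < n by lia.
have n_gt1 := ltnW n_gt2.
by exists (gmul t c); rewrite !app_gprefixS // sc stE gmulACA.
Qed.

Lemma principal_hyperideal (c : R) : 1 < m -> 2 < n -> hyperideal f' g' (principal c).
Proof.
move=> m_gt1 n_gt2; have n_gt1 := ltnW n_gt2; have [chgR [_ [_ [distr _]]]] := Kr.
have [_ [_ [_ [inv _]]]] := chgR.
have gmul_set_at v : app g' (set_at (scons c (fun _ => one)) 1 v) = gmul c v.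
  by apply: app_ext => [[|[|k]]].
split; first by exists c, one; rewrite gmulr1.
- split.
    move=> x xc z fxz.
    have [t tE] : exists t : 'I_m -> R, forall i, x i = gmul c (t i).
      exists (fun i => proj1_sig (constructive_indefinite_description _ (xc i))) => i.
      exact: proj2_sig (constructive_indefinite_description _ (xc i)).
    have [ts tsE] := ord_fun_seq t (ltnW m_gt1).
    have [|y [_ ->]] := (distr (scons c (fun _ => one)) ts 1 n_gt1 z).2.
      rewrite /app.
      suff -> : (fun i : 'I_m => app g' (set_at (scons c (fun _ => one)) 1 (ts i))) = x by [].
      by apply: functional_extensionality => i; rewrite gmul_set_at tE -tsE.
    by exists y; rewrite gmul_set_at.
  exists zero; apply: chg_on_sub => //; first by exists zero; rewrite gmulr0.
  move=> _ [t ->]; have [t' [[_ tt'0] _]] := inv t I.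
  exists (gmul c t'); split; first by exists t'.
  have c0 : zero = app g' (set_at (scons c (fun _ => one)) 1 zero).
    by rewrite gmul_set_at gmulr0.
  have := (distr (scons c (fun _ => one)) (scons t (scons t' (fun _ => zero))) 1 n_gt1 zero).1
    (ex_intro _ zero (conj tt'0 c0)).
  rewrite /hadd (@app_ext _ _ _ f' _ (fun k => app g' (set_at (scons c (fun _ => one)) 1
    (scons t (scons t' (fun _ => zero)) k)))) //.
  by move=> [|[|k]] _ /=; rewrite gmul_set_at ?gmulr0.
- move=> x i y lt_in [t ->].
  by exists (app g' (set_at x i t)); rewrite g_set_at_gmul.
Qed.

End KrasnerHyperring.

Section Hypermodule.
Variables (R M : Type) (m n : nat) (f' : ('I_m -> R) -> R -> Prop) (g' : ('I_n -> R) -> R)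
          (zero one : R) (f : ('I_m -> M) -> M -> Prop) (g : ('I_n.-1 -> R) -> M -> M -> Prop)
          (zeroM : M).
Hypotheses (n_gt1 : 1 < n) (Kr : krasner_hyperring f' g' zero one)
           (HM : hypermodule f' g' zero one f g zeroM).

Definition gact (c : R) : M -> M -> Prop := appg g (scons c (fun _ => one)).

Lemma gact1 (x z : M) : gact one x z <-> x = z.
Proof.
have [_ [_ [_ [_ [_ [_ g1]]]]]] := HM; rewrite /gact -(g1 x z).
by rewrite (@appg_ext _ _ _ g _ (fun _ => one)) // => [[|k]].
Qed.

Lemma gact0 (x z : M) : gact zero x z <-> zeroM = z.
Proof.
have [_ [_ [_ [_ [_ [g0 _]]]]]] := HM; rewrite /gact -(g0 (fun _ => one) x 0 ltac:(lia) z).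
by rewrite (@appg_ext _ _ _ g _ (set_at (fun _ => one) 0 zero)) // => [[|k]].
Qed.

Lemma appgE (s : nat -> R) (x z : M) : appg g s x z <-> gact (gprod g' one s) x z.
Proof.
have [_ [_ [_ [_ [gA [_ g1]]]]]] := HM.
have gone y w : appg g (fun j => gprefix one s n.-1 (n.-1 + j)) y w <-> y = w.
  by rewrite -(g1 y w) (@appg_ext _ _ _ g _ (fun _ => one)) // => k _; rewrite /gprefix; case_ifs.
have := gA (gprefix one s n.-1) x 0 ltac:(lia) z.
rewrite (@appg_ext _ _ _ g _ (scons (gprod g' one s) (fun _ => one))); last first.
  by move=> [|k] Hk //=; rewrite /gprefix; case_ifs.
rewrite /gact => ->; rewrite /gset.
rewrite (@appg_ext _ _ _ g (gprefix one s n.-1) s); last by move=> k lt_k; rewrite /gprefix lt_k.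
by split=> [xz|[y [/gone <- xz]]]; first by exists x; split => //; apply/gone.
Qed.

Lemma gactM (c d : R) (x z : M) :
  (exists w, gact d x w /\ gact c w z) <-> gact (gmul g' one c d) x z.
Proof.
have [_ [_ [_ [_ [gA _]]]]] := HM; have [_ [_ [gC _]]] := Kr.
(* the mixed associativity axiom with c heading the first block and d the second *)
pose r k := if k == 0 then c else if k == n.-1 then d else one.
have := gA r x 0 ltac:(lia) z.
rewrite (@appg_ext _ _ _ g _ (scons (gmul g' one c d) (fun _ => one))); last first.
  move=> [|k] Hk /=; last by rewrite /r; case_ifs.
  rewrite /gmul (@app_swapn _ _ _ g' 1 n.-1) //; try lia.
  by apply: app_ext => [[|[|j]]] Hj; rewrite /r /swapn; case_ifs.
rewrite /gact => ->; rewrite /gset.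
rewrite (@appg_ext _ _ _ g (fun j => r (n.-1 + j)) (scons d (fun _ => one))); last first.
  by move=> [|k] Hk /=; rewrite /r; case_ifs.
rewrite (@appg_ext _ _ _ g r (scons c (fun _ => one))); last first.
  by move=> [|k] Hk /=; rewrite /r; case_ifs.
by split=> [[w [dxw cwz]]|[w [dxw cwz]]]; exists w.
Qed.

Lemma gactC (c d : R) (x z : M) :
  (exists w, gact d x w /\ gact c w z) -> exists w, gact c x w /\ gact d w z.
Proof. by move/gactM => cdxz; apply/gactM; rewrite (gmulC Kr). Qed.

Lemma gact_zero (c : R) (z : M) : gact c zeroM z <-> zeroM = z.
Proof.
split.
- move=> c0z; apply/(gact0 zeroM); rewrite -(gmulr0 Kr c n_gt1); apply/gactM.
  by exists zeroM; split => //; apply/gact0.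
- move=> <-.
  have : gact (gmul g' one c zero) zeroM zeroM by rewrite (gmulr0 Kr c n_gt1); apply/gact0.
  by move/gactM => [w [/gact0 <-]].
Qed.

Lemma appg_zero (s : nat -> R) (z : M) : appg g s zeroM z <-> zeroM = z.
Proof. by rewrite appgE; exact: gact_zero. Qed.

Lemma subhypermodule_closed (P : M -> Prop) : 1 < m ->
  P zeroM ->
  (forall xs : nat -> M, (forall k, k < m -> P (xs k)) -> forall z, app f xs z -> P z) ->
  (forall r x z, P x -> appg g r x z -> P z) ->
  subhypermodule f g P.
Proof.
move=> m_gt1 P0 Pf Pg; have [[_ [_ [_ [inv _]]]] _] := Kr.
have [chgM [_ [_ [distr _]]]] := HM.
split; first by exists zeroM.
  split.
    move=> x xP z fxz; have [xs xsE] := ord_fun_seq x (ltnW m_gt1).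
    apply: (Pf xs) => [k lt_km|]; last by rewrite /app xsE.
    by have := xP (Ordinal lt_km); rewrite -xsE.
  exists zeroM; apply: chg_on_sub => // x Px.
  (* the opposite of x is (-1) x, read off 0 x = f(1 x, (-1) x, 0 x, ...) *)
  have [m1 [[_ one_m1_0] _]] := inv one I.
  pose s := scons one (scons m1 (fun _ => zero)).
  have [w [xw fw0]] : hopS f (fun k => appg g (set_at (fun _ => one) 0 (s k)) x) zeroM.
    apply/(distr (fun _ => one) s 0 x ltac:(lia) zeroM).
    exists zero; split => //.
    by rewrite (@appg_ext _ _ _ g _ (scons zero (fun _ => one))); [apply/gact0|move=> [|k]].
  have sxw k : k < m -> gact (s k) x (w k).
    move=> lt_km; have := xw k lt_km; rewrite /gact.
    by rewrite (@appg_ext _ _ _ g _ (scons (s k) (fun _ => one))) // => [[|j]].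
  exists (w 1); split; first exact: Pg (sxw 1 m_gt1).
  rewrite /hadd (@app_ext _ _ _ f _ w) // => [[|[|k]]] lt_km //=.
  - by apply/gact1; exact: sxw 0 lt_km.
  - by apply/gact0; exact: sxw _ lt_km.
exact: Pg.
Qed.

Lemma subhypermodule0 (N : M -> Prop) : subhypermodule f g N -> N zeroM.
Proof.
case=> [[x Nx] _ Ng]; apply: (Ng (scons zero (fun _ => one)) x) => //.
exact/gact0.
Qed.

Lemma subhypermodule_hop (N : M -> Prop) : subhypermodule f g N ->
  forall xs : nat -> M, (forall k, k < m -> N (xs k)) -> forall z, app f xs z -> N z.
Proof. by case=> [_ [Nf _] _] xs xsN z; apply: Nf => i; exact: xsN. Qed.

Lemma gset_subhypermodule (c : R) (W : M -> Prop) : 1 < m ->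
  subhypermodule f g W -> subhypermodule f g (gset g (scons c (fun _ => one)) W).
Proof.
move=> m_gt1 Wsub; have [chgM [_ [distrM _]]] := HM.
have cW0 : gset g (scons c (fun _ => one)) W zeroM.
  by exists zeroM; split; [exact: subhypermodule0 | exact/gact_zero].
apply: subhypermodule_closed => //.
- apply: (hop_closed_hadd m_gt1 chgM cW0) => x y z [y1 [Wy1 y1x]] [y2 [Wy2 y2y]] xyz.
  have [|y0 [y12 y0z]] :=
    (distrM (scons c (fun _ => one)) (scons y1 (scons y2 (fun _ => zeroM))) z).2.
    exists (scons x (scons y (fun _ => zeroM))); split => // - [|[|k]] _ //=.
    exact/gact_zero.
  exists y0; split => //; apply: (subhypermodule_hop Wsub _ y12) => - [|[|k]] _ //=.
  exact: subhypermodule0.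
- move=> u t w [y [Wy yt]] /appgE tw.
  have [v [yv vw]] := gactC (ex_intro _ t (conj yt tw)).
  by exists v; split => //; case: Wsub => _ _ Wg; exact: Wg _ y _ Wy yv.
Qed.

Definition hsum (A B : M -> Prop) : M -> Prop :=
  fun z => exists a b, [/\ A a, B b & hadd f zeroM a b z].

Lemma hsum_subhypermodule (A B : M -> Prop) : 1 < m ->
  subhypermodule f g A -> subhypermodule f g B -> subhypermodule f g (hsum A B).
Proof.
move=> m_gt1 Asub Bsub; have [chgM [_ [distrM _]]] := HM.
have AB0 : hsum A B zeroM.
  exists zeroM, zeroM; split; try exact: subhypermodule0.
  exact/(haddr0 chgM).
apply: subhypermodule_closed => //.
- apply: (hop_closed_hadd m_gt1 chgM AB0).
  move=> x y z [a1 [b1 [Aa1 Bb1 abx]]] [a2 [b2 [Aa2 Bb2 aby]]] xyz.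
  have [a [b [a12 b12 abz]]] := haddACA m_gt1 chgM abx aby xyz.
  exists a, b; split => //.
  + by apply: (subhypermodule_hop Asub _ a12) => - [|[|k]] _ //=; exact: subhypermodule0.
  + by apply: (subhypermodule_hop Bsub _ b12) => - [|[|k]] _ //=; exact: subhypermodule0.
- move=> u x w [a [b [Aa Bb abx]]] xw.
  have [ws [uws fws]] := (distrM u _ w).1 (ex_intro _ x (conj abx xw)).
  exists (ws 0), (ws 1); split.
  + by case: Asub => _ _ Ag; exact: Ag (uws 0 (ltnW m_gt1)).
  + by case: Bsub => _ _ Bg; exact: Bg (uws 1 m_gt1).
  + rewrite /hadd (@app_ext _ _ _ f _ ws) // => - [|[|k]] lt_km //=.
    by have := uws k.+2 lt_km => /= /appg_zero.
Qed.

Lemma hsum_subl (A B : M -> Prop) : B zeroM -> Defs.subset A (hsum A B).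
Proof.
have [chgM _] := HM.
by move=> B0 a Aa; exists a, zeroM; split => //; apply/(haddr0 chgM).
Qed.

Lemma hsum_subr (A B : M -> Prop) : 1 < m -> A zeroM -> Defs.subset B (hsum A B).
Proof.
have [chgM _] := HM.
move=> m_gt1 A0 b Bb; exists zeroM, b; split => //.
by apply/(haddC m_gt1 chgM)/(haddr0 chgM).
Qed.

Definition residual (r : nat -> R) (Q : M -> Prop) : M -> Prop :=
  fun y => Defs.subset (appg g r y) Q.

Lemma residual_subhypermodule (r : nat -> R) (Q : M -> Prop) : 1 < m ->
  subhypermodule f g Q -> subhypermodule f g (residual r Q).
Proof.
move=> m_gt1 Qsub; have [_ [_ [distrM _]]] := HM.
apply: subhypermodule_closed => //.
- by move=> z /appg_zero <-; exact: subhypermodule0.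
- move=> xs xsW z fz w zw.
  have [ws [xsws fws]] := (distrM r xs w).1 (ex_intro _ z (conj fz zw)).
  apply: (subhypermodule_hop Qsub _ fws) => k lt_km; exact: xsW k lt_km _ (xsws k lt_km).
- move=> u y z Wy /appgE yz w /appgE zw.
  have [v [/(appgE r) yv vw]] := gactC (ex_intro _ z (conj yz zw)).
  by case: Qsub => _ _ Qg; exact: Qg _ v _ (Wy v yv) vw.
Qed.

Lemma fNgN_principal_residual_sub (r : nat -> R) (Q : M -> Prop) : 2 < n ->
  subhypermodule f g Q ->
  Defs.subset (fNgN f g zeroM Q (fun j => principal g' one (r j)) (residual r Q)) Q.
Proof.
move=> n_gt2 Qsub z [xs [xsP fz]]; apply: (subhypermodule_hop Qsub _ fz) => - [|[|k]] lt_km.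
- exact: xsP 0 lt_km.
- have [rho [y [rho_r [Wy yx]]]] := xsP 1 lt_km.
  have [c cE] := gprod_principal Kr n_gt2 rho_r.
  move/appgE: yx; rewrite cE (gmulC Kr) // => /gactM [v [/(appgE r) yv vx]].
  by case: Qsub => _ _ Qg; exact: Qg (scons c (fun _ => one)) v _ (Wy v yv) vx.
- by have := xsP k.+2 lt_km => /= <-; exact: subhypermodule0.
Qed.

Lemma hsum_gset_sub_fNgN (Q W : M -> Prop) (c : R) :
  Defs.subset (hsum Q (gset g (scons c (fun _ => one)) W))
              (fNgN f g zeroM Q (scons (principal g' one c) (fun _ => eq one)) W).
Proof.
move=> z [q [t [Qq [y [Wy yt]] qtz]]].
exists (scons q (scons t (fun _ => zeroM))); split => // - [|[|k]] _ //=.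
exists (scons c (fun _ => one)), y; split => // - [|k] _ //=.
by exists one; rewrite (gmulr1 Kr).
Qed.

End Hypermodule.

Theorem mainTheorem2 (m n : nat) (R M : Type)
  (f' : ('I_m -> R) -> R -> Prop) (g' : ('I_n -> R) -> R) (zeroR one : R)
  (f : ('I_m -> M) -> M -> Prop) (g : ('I_(n.-1) -> R) -> M -> M -> Prop) (zeroM : M)
  (Q S : M -> Prop) :
  2 <= m -> 2 <= n ->
  krasner_hyperring f' g' zeroR one ->
  hypermodule f' g' zeroR one f g zeroM ->
  subhypermodule f g Q -> hproper Q ->
  (exists s, S s) -> (forall s, S s -> s <> zeroM) ->
  S_condition f' g' one f g zeroM S ->
  maximal_disjoint f g Q S ->
  classical_prime one f g Q.
Proof.
move=> m_gt1 n_gt1 Kr HM Qsub Qproper _ _ Scond [_ QS Qmax].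
split => // r a raQ.
have [n_le2|n_gt2] := leqP n 2.
  exists 0; split; first lia.
  by rewrite (@appg_ext _ _ _ g _ r) // => k lt_k; have -> : k = 0 by lia.
set W := residual g r Q.
have Wsub : subhypermodule f g W := residual_subhypermodule n_gt1 Kr HM r m_gt1 Qsub.
have [i [lt_i notSi]] : exists i, i < n.-1 /\
    ~ meets (fNgN f g zeroM Q (scons (principal g' one (r i)) (fun _ => eq one)) W) S.
  apply: NNPP => none; apply: QS.
  have Iideal j (_ : j < n.-1) := principal_hyperideal Kr (r j) m_gt1 n_gt2.
  have [j lt_j|z [Xz Sz]] := Scond _ Iideal Q W Qsub Wsub.
    by apply: NNPP => notSj; apply: none; exists j.
  by exists z; split => //; exact: (fNgN_principal_residual_sub n_gt1 Kr HM n_gt2 Qsub Xz).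
exists i; split => //.
set cW := gset g (scons (r i) (fun _ => one)) W.
have cWsub : subhypermodule f g cW := gset_subhypermodule n_gt1 Kr HM (r i) m_gt1 Wsub.
have Q0 : Q zeroM := subhypermodule0 n_gt1 HM Qsub.
have QcW_Q : seteq (hsum f zeroM Q cW) Q.
  apply: Qmax; first exact: (hsum_subhypermodule n_gt1 Kr HM m_gt1 Qsub cWsub).
    exact: (hsum_subl HM (subhypermodule0 n_gt1 HM cWsub)).
  move=> [z [QcWz Sz]]; apply: notSi; exists z; split => //.
  exact: (hsum_gset_sub_fNgN Kr QcWz).
by move=> z az; apply/QcW_Q/(hsum_subr HM m_gt1 Q0); exists a.
Qed.
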